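(* For any Boolean function $f:\{0,1\}^n\to\{0,1\}$, $\mathsf{KI}(f)\le\mathrm{depth}(f)$.
   Context: Fix a universal prefix-free Turing machine and let $K(a\mid b)$ denote the prefix-free Kolmogorov complexity of $a$ given $b$. For $f:S\to\{0,1\}$, $S\subseteq\Sigma^n$, $$\mathsf{KI}(f)=\min_{\alpha\in\Sigma^*}\ \max_{x,y:\ f(x)\neq f(y)}\ \min_{i:\ x_i\neq y_i}\big(K(i\mid x,\alpha)+K(i\mid y,\alpha)\big).$$ $\mathrm{depth}(f)$ is the minimum depth of a formula (binary tree with internal nodes labeled $\wedge,\vee$ and leaves labeled by literals $x_i,\neg x_i$) computing $f$. *)

From mathcomp Require Import all_boot.
From Stdlib Require Import ClassicalEpsilon.

Set Implicit Arguments.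
Unset Strict Implicit.
Unset Printing Implicit Defensive.

(* Minimum of a set of naturals (classical). If P is empty the value is     *)
(* unspecified; all uses below are on nonempty sets (for universal U).      *)
Definition natmin (P : nat -> Prop) : nat :=
  epsilon (inhabits 0%N) (fun m => P m /\ forall k, P k -> (m <= k)%N).

(* Binary strings Sigma* (Sigma = {0,1}) and their bijective coding to nat. *)
Fixpoint nat_of_bits (s : seq bool) : nat :=
  match s with
  | [::] => 0
  | b :: s' => (nat_of_bits s').*2 + (if b then 2 else 1)
  end.

(* Self-delimiting pair coding <s, t> of two strings. *)
Definition pair_bits (s t : seq bool) : seq bool :=
  flatten [seq [:: b; b] | b <- s] ++ [:: false; true] ++ t.

(* Model of computation: Minsky counter machines (Turing complete).         *)
Inductive instr := INC of nat | DECJZ of nat & nat.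
Definition cm := seq instr.
Definition regs := nat -> nat.
Definition upd (r : regs) (k v : nat) : regs := fun j => if j == k then v else r j.

(* One step; a state whose pc is out of range is halted (fixed point). *)
Definition step (P : cm) (s : nat * regs) : nat * regs :=
  let: (pc, r) := s in
  if pc < size P then
    match nth (INC 0) P pc with
    | INC k => (pc.+1, upd r k (r k).+1)
    | DECJZ k j => if r k is v.+1 then (pc.+1, upd r k v) else (j, r)
    end
  else s.

Definition init_regs (a b : nat) : regs :=
  fun j => if j == 0 then a else if j == 1 then b else 0.

Definition cm_computes (P : cm) (a b o : nat) : Prop :=
  exists t, let s := iter t (step P) (0, init_regs a b) in
            (size P <= s.1) /\ s.2 0 = o.

(* Conditional machines: M p c o  means  M(p | c) halts with output o.      *)
Definition machine := seq bool -> seq bool -> seq bool -> Prop.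

Definition computable_machine (M : machine) : Prop :=
  exists P : cm, forall p c o,
    M p c o <-> cm_computes P (nat_of_bits p) (nat_of_bits c) (nat_of_bits o).

Definition prefix_free (M : machine) : Prop :=
  forall c p q o o', M p c o -> M q c o' -> prefix p q -> p = q.

Definition prefix_free_machine (M : machine) : Prop :=
  computable_machine M /\ prefix_free M.

Definition universal_pf (U : machine) : Prop :=
  prefix_free_machine U /\
  forall M, prefix_free_machine M ->
    exists rho : seq bool, forall p c o, M p c o <-> U (rho ++ p) c o.

(* K_U(a | c): prefix-free Kolmogorov complexity of the string a (given as  *)
(* its code nat_of_bits a = i, so that indices i are strings) given c.      *)
Definition Kc (U : machine) (i : nat) (c : seq bool) : nat :=
  natmin (fun k => exists p o, U p c o /\ nat_of_bits o = i /\ size p = k).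

Definition KI (U : machine) (n : nat) (f : n.-tuple bool -> bool) : nat :=
  natmin (fun m => exists alpha : seq bool,
    m = \max_(xy : n.-tuple bool * n.-tuple bool | f xy.1 != f xy.2)
          natmin (fun k => exists i : 'I_n,
             tnth xy.1 i != tnth xy.2 i /\
             k = Kc U i (pair_bits xy.1 alpha) + Kc U i (pair_bits xy.2 alpha))).

Inductive formula (n : nat) :=
| Lit of 'I_n & bool
| FAnd of formula n & formula n
| FOr of formula n & formula n.

Fixpoint feval n (F : formula n) (x : n.-tuple bool) : bool :=
  match F with
  | Lit i b => tnth x i == b
  | FAnd F G => feval F x && feval G x
  | FOr F G => feval F x || feval G x
  end.

Fixpoint fdepth n (F : formula n) : nat :=
  match F with
  | Lit _ _ => 0
  | FAnd F G => (maxn (fdepth F) (fdepth G)).+1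
  | FOr F G => (maxn (fdepth F) (fdepth G)).+1
  end.

Definition depth (n : nat) (f : n.-tuple bool -> bool) : nat :=
  natmin (fun d => exists F : formula n, (forall x, feval F x = f x) /\ fdepth F = d).

(* A formula F of depth d computing f is a Karchmer-Wigderson protocol: for
   f x = 1 and f y = 0, walk down F keeping a subformula true at x and false at
   y; the x-player picks the child at disjunctions, the y-player at
   conjunctions, and after at most d choices they reach a literal on some x_i
   with x_i <> y_i.  Knowing x, the walk is determined by the y-player's
   choices p_x, and knowing y by the x-player's choices p_y, where
   |p_x| + |p_y| <= d.  To use the same advice for all pairs, alpha is the table
   of the outcomes of all walks from all inputs, and one fixed prefix-free
   counter machine parses <x, alpha> and follows the table along p_x; it halts
   exactly when p_x ends at a leaf, which makes it prefix-free.  Running it on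
   the universal machine costs one constant prefix per description. *)

From mathcomp Require Import all_boot zify.
From Stdlib Require Import ClassicalEpsilon Classical FunctionalExtensionality.

Set Implicit Arguments.
Unset Strict Implicit.
Unset Printing Implicit Defensive.

(** * Minima of sets of naturals *)

Lemma natmin_spec (P : nat -> Prop) k : P k ->
  P (natmin P) /\ forall j, P j -> natmin P <= j.
Proof.
move=> Pk; apply: (epsilon_spec (inhabits 0) (fun m => P m /\ forall j, P j -> m <= j)).
elim: k {-2}k (leqnn k) Pk => [|k IH] j hj Pj.
  by move: hj; rewrite leqn0 => /eqP hj; subst j; exists 0.
have [[i [hij Pi]]|nlt] := classic (exists i, i < j /\ P i).
  by apply: (IH i) => //; rewrite -ltnS; apply: leq_trans hij hj.
exists j; split=> // i Pi; rewrite leqNgt; apply/negP => hij; apply: nlt; by exists i.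
Qed.

Lemma natmin_le (P : nat -> Prop) k : P k -> natmin P <= k.
Proof. by move=> Pk; case: (natmin_spec Pk) => _; apply. Qed.

Lemma natmin_holds (P : nat -> Prop) k : P k -> P (natmin P).
Proof. by move=> Pk; case: (natmin_spec Pk). Qed.

(** * Binary strings as naturals *)

Definition pop_bit (n : nat) : bool * nat :=
  if n is 0 then (false, 0) else if odd n then (false, n./2) else (true, n./2 - 1).

Lemma pop_bit_cons b s : pop_bit (nat_of_bits (b :: s)) = (b, nat_of_bits s).
Proof.
rewrite /=; case: b.
  by rewrite addn2 /= odd_double /= doubleK subn1.
by rewrite addn1 /= odd_double /= uphalf_double.
Qed.

Lemma pop_bit_lt n : 0 < n -> (pop_bit n).2 < n.
Proof.
case: n => // n _; have half_lt : n.+1./2 < n.+1 by rewrite ltn_half_double -addnn; lia.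
by rewrite /pop_bit /=; case: ifP => _ //=; apply: leq_ltn_trans (leq_subr 1 _) half_lt.
Qed.

Lemma pop_bit_le n : (pop_bit n).2 <= n.
Proof. by case: n => [|n] //; apply/ltnW/pop_bit_lt. Qed.

Lemma pop_bit_true_gt0 n : (pop_bit n).1 -> 0 < n.
Proof. by case: n. Qed.

Lemma pop_bitSS n : pop_bit n.+3 = ((pop_bit n.+1).1, (pop_bit n.+1).2.+1).
Proof. by rewrite /pop_bit /=; case: n => [|n] //=; case: (odd n) => //=; rewrite !subn1. Qed.

Lemma pop_bitK n : 0 < n -> ((pop_bit n).2).*2 + (if (pop_bit n).1 then 2 else 1) = n.
Proof.
case: n => // n _; have := odd_double_half n.+1; rewrite /pop_bit.
case: (odd n.+1) => /= h; first by rewrite addnC.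
by move: h; case: (uphalf n) => [|k] /=; rewrite add0n // subn1 /= doubleS addn2.
Qed.

Arguments pop_bit : simpl never.

Lemma nat_of_bits_eq0 s : (nat_of_bits s == 0) = (s == [::]).
Proof. by case: s => //= b s; rewrite addn_eq0; case: b; rewrite andbF. Qed.

Lemma nat_of_bits_consS b s : exists k, nat_of_bits (b :: s) = k.+1.
Proof. by case: b; [exists (nat_of_bits s).*2.+1; rewrite /= addn2 | exists (nat_of_bits s).*2; rewrite /= addn1]. Qed.

Fixpoint bits_of_rec (fuel n : nat) : seq bool :=
  if fuel is fuel'.+1 then
    (if n is 0 then [::] else (pop_bit n).1 :: bits_of_rec fuel' (pop_bit n).2)
  else [::].

Definition bits_of n := bits_of_rec n n.

Lemma bits_ofK : cancel bits_of nat_of_bits.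
Proof.
suff fuelK f n : n <= f -> nat_of_bits (bits_of_rec f n) = n by move=> n; apply: fuelK.
elim: f n => [|f IH] [|n] hn //=.
have lt_pop := pop_bit_lt (ltn0Sn n).
by rewrite IH ?pop_bitK //; lia.
Qed.

Lemma nat_of_bitsK : cancel nat_of_bits bits_of.
Proof.
suff fuelK f s : nat_of_bits s <= f -> bits_of_rec f (nat_of_bits s) = s by move=> s; apply: fuelK.
elim: s f => [|b s IH] [|f] //.
  by have [k ->] := nat_of_bits_consS b s.
move=> hf; have [k hk] := nat_of_bits_consS b s.
rewrite hk /= -hk pop_bit_cons IH //; clear hk.
by move: hf; rewrite /= -addnn; case: b; lia.
Qed.

Definition push_bit (J : nat) (b : bool) : nat := J.*2 + (if b then 2 else 1).

(* Last bit first, so that appending a bit acts on codes by [push_bit]. *)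
Definition rcode (l : seq bool) : nat := nat_of_bits (rev l).

Lemma rcode_rcons l b : rcode (rcons l b) = push_bit (rcode l) b.
Proof. by rewrite /rcode rev_rcons. Qed.

Lemma foldl_push_bit l : foldl push_bit 0 l = rcode l.
Proof. by elim/last_ind: l => // l b IH; rewrite foldl_rcons IH rcode_rcons. Qed.

Lemma rcode_lt l : rcode l < 2 ^ (size l).+1.
Proof.
suff : (rcode l).+2 <= 2 ^ (size l).+1 by lia.
rewrite /rcode -size_rev; elim: (rev l) => //= b s IH.
by rewrite expnS -addnn; case: b; lia.
Qed.

Lemma rcodeK l : rev (bits_of (rcode l)) = l.
Proof. by rewrite /rcode nat_of_bitsK revK. Qed.

(** * Counter machine programming *)

Definition regs_of (s : seq nat) : regs := fun j => nth 0 s j.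

Arguments upd : simpl never.

Lemma upd_regs_of s k v : upd (regs_of s) k v = regs_of (set_nth 0 s k v).
Proof. by apply: functional_extensionality => j; rewrite /upd /regs_of nth_set_nth. Qed.

Lemma init_regs_of a b : init_regs a b = regs_of [:: a; b; 0; 0; 0; 0; 0; 0].
Proof.
apply: functional_extensionality => j; rewrite /init_regs /regs_of.
by case: j => [|[|[|[|[|[|[|[|j]]]]]]]] //=; case: j.
Qed.

Definition reach (P : cm) s s' := exists t, iter t (step P) s = s'.

Lemma reach_refl P s : reach P s s.
Proof. by exists 0. Qed.

Lemma reach_step P s s' : reach P (step P s) s' -> reach P s s'.
Proof. by case=> t H; exists t.+1; rewrite iterSr. Qed.

Lemma reach_trans P s1 s2 s3 : reach P s1 s2 -> reach P s2 s3 -> reach P s1 s3.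
Proof. by case=> t1 H1 [t2 H2]; exists (t2 + t1); rewrite iterD H1. Qed.

Lemma iter_step_halted P t s : size P <= s.1 -> iter t (step P) s = s.
Proof. by case: s => pc r /= h; elim: t => //= t ->; rewrite /step ltnNge h. Qed.

Definition exec (i : instr) (pc : nat) (r : regs) : nat * regs :=
  match i with
  | INC k => (pc.+1, upd r k (r k).+1)
  | DECJZ k j => if r k is v.+1 then (pc.+1, upd r k v) else (j, r)
  end.

Definition code_at (P : cm) a (l : seq instr) :=
  take (size l) (drop a P) = l /\ a + size l <= size P.

Lemma step_code_at P a l pc r : code_at P a l -> a <= pc < a + size l ->
  step P (pc, r) = exec (nth (INC 0) l (pc - a)) pc r.
Proof.
case=> Ht Hs /andP [h1 h2].
have hpc : pc < size P by apply: leq_trans h2 Hs.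
have hk : pc - a < size l by rewrite ltn_subLR.
by rewrite /step hpc -Ht nth_take // nth_drop subnKC.
Qed.

Ltac step_in Hc := apply: reach_step; rewrite (step_code_at _ Hc); [|rewrite /=; lia];
  rewrite ?addKn ?subnn /= ?upd_regs_of /= -?addnS.

(* Pops the first bit of the string coded in register R (R = 0 or 1) and jumps
   to E, F0 or F1 when the string is empty, resp. starts with false or true.
   Register 5 must hold 0 ([DECJZ 5 j] is an unconditional jump) and register
   6 is scratch, receiving half of R. *)
Definition pop_code (R a E F0 F1 : nat) : seq instr :=
  [:: DECJZ R E; DECJZ R (a + 6); DECJZ R (a + 9); INC R; INC 6; DECJZ 5 a;
      DECJZ 6 F0; INC R; DECJZ 5 (a + 6); DECJZ 6 F1; INC R; DECJZ 5 (a + 9)].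

Definition pop_exit (m E F0 F1 : nat) :=
  if m == 0 then E else if (pop_bit m).1 then F1 else F0.

Lemma pop_exitSS m E F0 F1 : pop_exit m.+3 E F0 F1 = pop_exit m.+1 E F0 F1.
Proof. by rewrite /pop_exit pop_bitSS. Qed.

Lemma pop_exit_same m X F1 : (pop_bit m).1 = false -> pop_exit m X X F1 = X.
Proof. by rewrite /pop_exit => ->; case: (m == 0). Qed.

Lemma pop_exit_true m E F0 F1 : (pop_bit m).1 -> pop_exit m E F0 F1 = F1.
Proof. by rewrite /pop_exit; case: m => // m ->. Qed.

Lemma pop_exit_const m X : pop_exit m X X X = X.
Proof. by rewrite /pop_exit; case: (m == 0); case: (pop_bit m).1. Qed.

Lemma pop_exit_false m E F0 F1 : 0 < m -> (pop_bit m).1 = false -> pop_exit m E F0 F1 = F0.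
Proof. by rewrite /pop_exit; case: m => // m _ ->. Qed.

Section PopCode.

Variables (P : cm) (a R E F0 F1 : nat) (s : seq nat).
Hypotheses (Hc : code_at P a (pop_code R a E F0 F1)) (HR : R <= 1) (Hs : size s = 8)
  (H5 : nth 0 s 5 = 0).

Lemma pop_code_move k X : k \in [:: 6; 9] -> X = (if k == 6 then F0 else F1) -> forall q x,
  reach P (a + k, regs_of (set_nth 0 (set_nth 0 s 6 q) R x))
          (X, regs_of (set_nth 0 (set_nth 0 s 6 0) R (x + q))).
Proof.
move: Hc HR H5; case: s Hs => [|a0 [|a1 [|a2 [|a3 [|a4 [|a5 [|a6 [|a7 [|]]]]]]]]] //= _.
case: R => [|[|//]] Hc' _ /= -> Hk ->; move: Hk; rewrite !inE => /orP [] /eqP -> /=;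
  (elim=> [|q IH] x; [step_in Hc'; rewrite addn0; exact: reach_refl|
   step_in Hc'; step_in Hc'; step_in Hc'; rewrite -[x + q.+1]addSnnS; apply: IH]).
Qed.

Lemma pop_code_loop m q : 0 < m ->
  reach P (a, regs_of (set_nth 0 (set_nth 0 s 6 q) R m))
          (pop_exit m E F0 F1, regs_of (set_nth 0 (set_nth 0 s 6 0) R (q + (pop_bit m).2))).
Proof.
have Hmv := pop_code_move; move: Hc HR H5 Hmv.
case: s Hs => [|a0 [|a1 [|a2 [|a3 [|a4 [|a5 [|a6 [|a7 [|]]]]]]]]] //= _.
case: R => [|[|//]] Hc' _ /= -> Hmv;
 (elim: m {-2}m (leqnn m) q => [|N IH] m hm q hm0; first by case: m hm hm0);
 rewrite -[a in (a, _)]addn0;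
 (case: m hm hm0 => [|[|[|m]]] hm _ //;
  [ step_in Hc'; step_in Hc'; rewrite addn0; exact: (Hmv 6 F0)
  | step_in Hc'; step_in Hc'; step_in Hc'; rewrite addn0; exact: (Hmv 9 F1)
  | rewrite pop_exitSS pop_bitSS /= -[q + _.+1]addSnnS;
    do 6 step_in Hc';
    exact: (IH m.+1 (ltac:(lia) : m.+1 <= N) q.+1 (ltn0Sn _)) ]).
Qed.

Lemma pop_code_spec m : nth 0 s 6 = 0 ->
  reach P (a, regs_of (set_nth 0 s R m)) (pop_exit m E F0 F1, regs_of (set_nth 0 s R (pop_bit m).2)).
Proof.
move=> H6; case: m => [|m].
  apply: reach_step; rewrite (step_code_at _ Hc); last by rewrite /=; lia.
  by rewrite subnn /= /regs_of nth_set_nth /= eqxx; exact: reach_refl.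
have := pop_code_loop 0 (ltn0Sn m).
suff -> : set_nth 0 s 6 0 = s by [].
by case: s Hs H6 => [|a0 [|a1 [|a2 [|a3 [|a4 [|a5 [|a6 [|a7 [|]]]]]]]]] //= _ ->.
Qed.

End PopCode.

(** * A prefix-free table-lookup decoder *)

(* On program p (register 0) and condition <x, alpha> (register 1), where alpha
   is a table of unary-coded naturals, the decoder computes J = rcode x and then
   reads entries of alpha: at index J, an entry v.+1 halts with output v if p is
   exhausted, while an entry 0 consumes the next bit b of p and moves on to
   index push_bit J b.  All other cases jump to the infinite loop at pc 128;
   pc 129 halts.  Register use: 2 the index J, 3 and 6 scratch, 4 the entry
   read, 5 constantly 0, 7 the bit b.  Since alpha is read sequentially, moving
   from index J to push_bit J b skips J + b entries after the one at J. *)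
Definition decoder : cm := Eval compute in
 pop_code 1 0 128 24 12 ++
 pop_code 1 12 36 36 36 ++
 pop_code 1 24 37 37 45 ++
 [:: INC 3; INC 3;
     DECJZ 2 42; INC 3; INC 3; DECJZ 5 38;
     DECJZ 3 0; INC 2; DECJZ 5 42;
     DECJZ 2 59; INC 3 ] ++
 pop_code 1 47 45 45 47 ++
 [:: DECJZ 3 62; INC 2; DECJZ 5 59 ] ++
 pop_code 1 62 76 76 74 ++
 [:: INC 4; DECJZ 5 62;
     DECJZ 4 82;
     DECJZ 0 79; DECJZ 5 128;
     DECJZ 4 129; INC 0; DECJZ 5 79 ] ++
 pop_code 0 82 128 95 94 ++
 [:: INC 7;
     DECJZ 2 110; INC 3; INC 3 ] ++
 pop_code 1 98 95 95 98 ++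
 [:: DECJZ 7 124; INC 3 ] ++
 pop_code 1 112 124 124 112 ++
 [:: INC 3; DECJZ 3 62; INC 2; DECJZ 5 125;
     DECJZ 5 128 ].

Lemma size_decoder : size decoder = 129. Proof. by []. Qed.

Lemma pop_at0 : code_at decoder 0 (pop_code 1 0 128 24 12). Proof. by []. Qed.
Lemma pop_at12 : code_at decoder 12 (pop_code 1 12 36 36 36). Proof. by []. Qed.
Lemma pop_at24 : code_at decoder 24 (pop_code 1 24 37 37 45). Proof. by []. Qed.
Lemma pop_at47 : code_at decoder 47 (pop_code 1 47 45 45 47). Proof. by []. Qed.
Lemma pop_at62 : code_at decoder 62 (pop_code 1 62 76 76 74). Proof. by []. Qed.
Lemma pop_at82 : code_at decoder 82 (pop_code 0 82 128 95 94). Proof. by []. Qed.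
Lemma pop_at98 : code_at decoder 98 (pop_code 1 98 95 95 98). Proof. by []. Qed.
Lemma pop_at112 : code_at decoder 112 (pop_code 1 112 124 124 112). Proof. by []. Qed.
Lemma move_at42 : code_at decoder 42 [:: DECJZ 3 0; INC 2; DECJZ 5 42]. Proof. by []. Qed.
Lemma move_at59 : code_at decoder 59 [:: DECJZ 3 62; INC 2; DECJZ 5 59]. Proof. by []. Qed.
Lemma move_at125 : code_at decoder 125 [:: DECJZ 3 62; INC 2; DECJZ 5 125]. Proof. by []. Qed.

Lemma step_decoder pc r : pc < 129 -> step decoder (pc, r) = exec (nth (INC 0) decoder pc) pc r.
Proof. by rewrite /step size_decoder => ->. Qed.

Ltac run_step := apply: reach_step; rewrite step_decoder //;
  rewrite [nth _ decoder _]/= /= ?upd_regs_of /=.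

(* [read_unary n v m]: the string coded by n is [nseq v true ++ false :: s]
   with m coding s (or n codes a string of v trues and m = 0). *)
Inductive read_unary : nat -> nat -> nat -> Prop :=
| ReadUnary0 n : (pop_bit n).1 = false -> read_unary n 0 (pop_bit n).2
| ReadUnaryS n v m : (pop_bit n).1 -> read_unary (pop_bit n).2 v m -> read_unary n v.+1 m.

Inductive skip_unary : nat -> nat -> nat -> Prop :=
| SkipUnary0 A : skip_unary 0 A A
| SkipUnaryS k A v A1 A2 : read_unary A v A1 -> skip_unary k A1 A2 -> skip_unary k.+1 A A2.

(* [parse_pair J C res]: parsing the condition C as <x, alpha>, starting with
   index J, yields [Some (foldl push_bit J x, alpha)], or [None] on bad input. *)
Inductive parse_pair : nat -> nat -> option (nat * nat) -> Prop :=
| ParseEnd J : parse_pair J 0 None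
| ParseTrue J C r : 0 < C -> (pop_bit C).1 ->
    parse_pair (push_bit J true) (pop_bit (pop_bit C).2).2 r -> parse_pair J C r
| ParseSep J C : 0 < C -> (pop_bit C).1 = false -> (pop_bit (pop_bit C).2).1 ->
    parse_pair J C (Some (J, (pop_bit (pop_bit C).2).2))
| ParseFalse J C r : 0 < C -> (pop_bit C).1 = false -> (pop_bit (pop_bit C).2).1 = false ->
    parse_pair (push_bit J false) (pop_bit (pop_bit C).2).2 r -> parse_pair J C r.

(* [follow p J A res]: following program p from index J, with A coding the
   table from entry J on, ends with output [res] ([None] for divergence). *)
Inductive follow : seq bool -> nat -> nat -> option nat -> Prop :=
| FollowLeaf p J A v A1 : read_unary A v.+1 A1 -> follow p J A (if p is [::] then Some v else None)
| FollowNil J A A1 : read_unary A 0 A1 -> follow [::] J A None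
| FollowCons (b : bool) p J A A1 A2 A3 res : read_unary A 0 A1 -> skip_unary J A1 A2 ->
    skip_unary b A2 A3 -> follow p (push_bit J b) A3 res -> follow (b :: p) J A res.

Lemma run_62_76 n v m : read_unary n v m -> forall p J T V B,
  reach decoder (62, regs_of [:: p; n; J; T; V; 0; 0; B]) (76, regs_of [:: p; m; J; T; V + v; 0; 0; B]).
Proof.
elim=> {n v m} [n Hn | n v m Hn _ IH] p J T V B;
  have := pop_code_spec (s := [:: p; 0; J; T; V; 0; 0; B]) pop_at62 erefl erefl erefl n erefl.
  by rewrite /= pop_exit_same // addn0.
rewrite /= pop_exit_true // => H; apply: reach_trans H _.
by run_step; run_step; rewrite -[V + v.+1]addSnnS; apply: IH.
Qed.

Lemma run_skip_entry a X n v m : code_at decoder a (pop_code 1 a X X a) -> read_unary n v m ->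
  forall p J T V B,
  reach decoder (a, regs_of [:: p; n; J; T; V; 0; 0; B]) (X, regs_of [:: p; m; J; T; V; 0; 0; B]).
Proof.
move=> Hc; elim=> {n v m} [n Hn | n v m Hn _ IH] p J T V B;
  have := pop_code_spec (s := [:: p; 0; J; T; V; 0; 0; B]) Hc erefl erefl erefl n erefl.
  by rewrite /= pop_exit_same.
by rewrite /= pop_exit_true // => H; apply: reach_trans H _; apply: IH.
Qed.

Lemma run_45_59 k A A' : skip_unary k A A' -> forall p T,
  reach decoder (45, regs_of [:: p; A; k; T; 0; 0; 0; 0]) (59, regs_of [:: p; A'; 0; T + k; 0; 0; 0; 0]).
Proof.
elim=> {k A A'} [A | k A v A1 A2 H1 _ IH] p T.
  by run_step; rewrite addn0; apply: reach_refl.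
run_step; run_step; apply: reach_trans (run_skip_entry pop_at47 H1 _ _ _ _ _) _.
by rewrite -[T + k.+1]addSnnS; apply: IH.
Qed.

Lemma run_95_110 k A A' : skip_unary k A A' -> forall p T B,
  reach decoder (95, regs_of [:: p; A; k; T; 0; 0; 0; B]) (110, regs_of [:: p; A'; 0; T + k.*2; 0; 0; 0; B]).
Proof.
elim=> {k A A'} [A | k A v A1 A2 H1 _ IH] p T B.
  by run_step; rewrite addn0; apply: reach_refl.
run_step; run_step; run_step; apply: reach_trans (run_skip_entry pop_at98 H1 _ _ _ _ _) _.
by have -> : T + k.+1.*2 = T.+2 + k.*2 by lia; apply: IH.
Qed.

Lemma run_move_T_J a X J T p A :
  code_at decoder a [:: DECJZ 3 X; INC 2; DECJZ 5 a] ->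
  reach decoder (a, regs_of [:: p; A; J; T; 0; 0; 0; 0]) (X, regs_of [:: p; A; J + T; 0; 0; 0; 0; 0]).
Proof.
move=> Hc; elim: T J => [|T IH] J; rewrite -[a in (a, _)]addn0.
  by step_in Hc; rewrite addn0; apply: reach_refl.
by do 3 step_in Hc; rewrite -[J + T.+1]addSnnS; apply: IH.
Qed.

Lemma run_38_42 J p A T :
  reach decoder (38, regs_of [:: p; A; J; T; 0; 0; 0; 0]) (42, regs_of [:: p; A; 0; T + J.*2; 0; 0; 0; 0]).
Proof.
elim: J T => [|J IH] T; first by run_step; rewrite addn0; apply: reach_refl.
by do 4 run_step; have -> : T + J.+1.*2 = T.+2 + J.*2 by lia; apply: IH.
Qed.

Lemma run_79_129 V x A J T B :
  reach decoder (79, regs_of [:: x; A; J; T; V; 0; 0; B]) (129, regs_of [:: x + V; A; J; T; 0; 0; 0; B]).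
Proof.
elim: V x => [|V IH] x; first by run_step; rewrite addn0; apply: reach_refl.
by do 3 run_step; rewrite -[x + V.+1]addSnnS; apply: IH.
Qed.

Definition diverges (s : nat * regs) :=
  exists s', reach decoder s (128, regs_of s') /\ nth 0 s' 5 = 0.

Lemma diverges_reach s0 s1 : reach decoder s0 s1 -> diverges s1 -> diverges s0.
Proof. by move=> H [s' [H1 H2]]; exists s'; split=> //; apply: reach_trans H H1. Qed.

Definition parse_outcome (s : nat * regs) p (res : option (nat * nat)) :=
  if res is Some (J, A) then reach decoder s (45, regs_of [:: p; A; J; 0; 0; 0; 0; 0])
  else diverges s.

Lemma parse_outcome_reach s0 s1 p res :
  reach decoder s0 s1 -> parse_outcome s1 p res -> parse_outcome s0 p res.
Proof. by case: res => [[J A]|] /=; [apply: reach_trans | apply: diverges_reach]. Qed.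

Lemma run_parse_pair J C res : parse_pair J C res ->
  forall p, parse_outcome (0, regs_of [:: p; C; J; 0; 0; 0; 0; 0]) p res.
Proof.
have pop0 p C' J' := pop_code_spec (s := [:: p; 0; J'; 0; 0; 0; 0; 0]) pop_at0 erefl erefl erefl C' erefl.
have pop12 p C' J' := pop_code_spec (s := [:: p; 0; J'; 0; 0; 0; 0; 0]) pop_at12 erefl erefl erefl C' erefl.
have pop24 p C' J' := pop_code_spec (s := [:: p; 0; J'; 0; 0; 0; 0; 0]) pop_at24 erefl erefl erefl C' erefl.
elim=> {J C res} [J | J C r HC H1 _ IH | J C HC H1 H2 | J C r HC H1 H2 _ IH] p.
- by exists [:: p; 0; J; 0; 0; 0; 0; 0]; split=> //; have := pop0 p 0 J.
- apply: parse_outcome_reach (IH p).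
  have := pop0 p C J; rewrite /= pop_exit_true // => H; apply: reach_trans H _.
  have := pop12 p (pop_bit C).2 J; rewrite /= pop_exit_const => H; apply: reach_trans H _.
  run_step; run_step; apply: reach_trans (run_38_42 _ _ _ _) _.
  apply: reach_trans (run_move_T_J _ _ _ _ move_at42) _.
  by rewrite add0n addnC; apply: reach_refl.
- have := pop0 p C J; rewrite /= pop_exit_false // => H; apply: reach_trans H _.
  by have := pop24 p (pop_bit C).2 J; rewrite /= pop_exit_true.
- apply: parse_outcome_reach (IH p).
  have := pop0 p C J; rewrite /= pop_exit_false // => H; apply: reach_trans H _.
  have := pop24 p (pop_bit C).2 J; rewrite /= pop_exit_same // => H; apply: reach_trans H _.
  run_step; apply: reach_trans (run_38_42 _ _ _ _) _.
  apply: reach_trans (run_move_T_J _ _ _ _ move_at42) _.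
  by rewrite add0n addnC; apply: reach_refl.
Qed.

Definition follow_outcome (s : nat * regs) (res : option nat) :=
  if res is Some o then exists s', reach decoder s (129, regs_of (o :: s')) else diverges s.

Lemma follow_outcome_reach s0 s1 res :
  reach decoder s0 s1 -> follow_outcome s1 res -> follow_outcome s0 res.
Proof.
case: res => [o|] /= H; last exact: diverges_reach.
by case=> s' H1; exists s'; apply: reach_trans H H1.
Qed.

Lemma skip_unary0 A A' : skip_unary 0 A A' -> A' = A.
Proof. by move=> H; inversion H. Qed.

Lemma skip_unary1 A A' : skip_unary 1 A A' -> exists v, read_unary A v A'.
Proof.
move=> H; inversion H as [|k A0 v A1 A2 Hr Hs]; subst.
by move: (skip_unary0 Hs) => ->; exists v.
Qed.

Lemma pop_exit_cons b s E F0 F1 : pop_exit (nat_of_bits (b :: s)) E F0 F1 = if b then F1 else F0.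
Proof. by rewrite /pop_exit pop_bit_cons nat_of_bits_eq0. Qed.

Lemma run_follow p J A res : follow p J A res ->
  follow_outcome (62, regs_of [:: nat_of_bits p; A; J; 0; 0; 0; 0; 0]) res.
Proof.
have pop82 p' A' J' :=
  pop_code_spec (s := [:: 0; A'; J'; 0; 0; 0; 0; 0]) pop_at82 erefl erefl erefl p' erefl.
elim=> {p J A res} [p J A v A1 H1 | J A A1 H1 | b p J A A1 A2 A3 res H1 H2 H3 _ IH];
  apply: follow_outcome_reach (run_62_76 H1 _ _ _ _ _) _; rewrite add0n.
- case: p => [|b p]; last have [k ->] := nat_of_bits_consS b p.
    exists [:: A1; J; 0; 0; 0; 0; 0].
    by run_step; run_step; have := run_79_129 v 0 A1 J 0 0; rewrite add0n.
  by exists [:: k; A1; J; 0; v; 0; 0; 0]; split=> //; do 3 run_step; apply: reach_refl.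
- by exists [:: 0; A1; J; 0; 0; 0; 0; 0]; split=> //; run_step; apply: (pop82 0).
- apply: follow_outcome_reach _ IH.
  run_step; have := pop82 (nat_of_bits (b :: p)) A1 J.
  rewrite pop_exit_cons pop_bit_cons /= => H; apply: reach_trans H _.
  case: b H3 => H3.
  + run_step; apply: reach_trans (run_95_110 H2 _ _ _) _.
    have [v Hv] := skip_unary1 H3.
    run_step; run_step; apply: reach_trans (run_skip_entry pop_at112 Hv _ _ _ _ _) _.
    run_step; apply: reach_trans (run_move_T_J _ _ _ _ move_at125) _.
    by rewrite /push_bit !add0n addn2; apply: reach_refl.
  + rewrite (skip_unary0 H3); apply: reach_trans (run_95_110 H2 _ _ _) _.
    run_step; run_step; apply: reach_trans (run_move_T_J _ _ _ _ move_at125) _.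
    by rewrite /push_bit !add0n addn1; apply: reach_refl.
Qed.

Definition decodes p C res :=
  (parse_pair 0 C None /\ res = None) \/
  (exists J A A', [/\ parse_pair 0 C (Some (J, A)), skip_unary J A A' & follow p J A' res]).

Lemma run_decodes p C res : decodes p C res -> follow_outcome (0, init_regs (nat_of_bits p) C) res.
Proof.
rewrite init_regs_of; case=> [[H ->]|[J [A [A' [H1 H2 H3]]]]].
  exact: (run_parse_pair H (nat_of_bits p)).
apply: follow_outcome_reach (run_follow H3).
apply: reach_trans (run_parse_pair H1 (nat_of_bits p)) _.
apply: reach_trans (run_45_59 H2 _ _) _.
by apply: reach_trans (run_move_T_J _ _ _ _ move_at59) _; rewrite !add0n; apply: reach_refl.
Qed.

Lemma read_unary_total n : exists v m, read_unary n v m.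
Proof.
elim: n {-2}n (leqnn n) => [|N IH] n hn.
  by move: hn; rewrite leqn0 => /eqP ->; exists 0, 0; apply: (ReadUnary0 (n := 0)).
case h: (pop_bit n).1; last by exists 0, (pop_bit n).2; apply: ReadUnary0.
have hlt := pop_bit_lt (pop_bit_true_gt0 h).
have [v [m Hm]] := IH (pop_bit n).2 (ltac:(lia)).
by exists v.+1, m; apply: ReadUnaryS.
Qed.

Lemma skip_unary_total k A : exists A', skip_unary k A A'.
Proof.
elim: k A => [|k IH] A; first by exists A; apply: SkipUnary0.
have [v [A1 H1]] := read_unary_total A; have [A2 H2] := IH A1.
by exists A2; apply: SkipUnaryS H1 H2.
Qed.

Lemma parse_pair_total C J : exists res, parse_pair J C res.
Proof.
elim: C {-2}C (leqnn C) J => [|N IH] [|C] hC J //; try by exists None; apply: ParseEnd.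
have hlt : (pop_bit (pop_bit C.+1).2).2 <= N.
  by have := pop_bit_lt (ltn0Sn C); have := pop_bit_le (pop_bit C.+1).2; lia.
case h1: (pop_bit C.+1).1.
  by have [r Hr] := IH _ hlt (push_bit J true); exists r; apply: ParseTrue.
case h2: (pop_bit (pop_bit C.+1).2).1; first by eexists; apply: ParseSep.
by have [r Hr] := IH _ hlt (push_bit J false); exists r; apply: ParseFalse.
Qed.

Lemma follow_total p J A : exists res, follow p J A res.
Proof.
elim: p J A => [|b p IH] J A; have [[|v] [A1 H1]] := read_unary_total A.
- by eexists; apply: FollowNil H1.
- by eexists; apply: FollowLeaf H1.
- have [A2 H2] := skip_unary_total J A1; have [A3 H3] := skip_unary_total b A2.
  by have [r Hr] := IH (push_bit J b) A3; exists r; apply: FollowCons H1 H2 H3 Hr.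
- by eexists; apply: FollowLeaf H1.
Qed.

Lemma decodes_total p C : exists res, decodes p C res.
Proof.
have [[[J A]|] H] := parse_pair_total C 0; last by exists None; left.
have [A' H2] := skip_unary_total J A; have [r Hr] := follow_total p J A'.
by exists r; right; exists J, A, A'.
Qed.

Lemma read_unary_det n v m : read_unary n v m -> forall v' m', read_unary n v' m' -> v = v' /\ m = m'.
Proof.
elim=> {n v m} [n Hn | n v m Hn _ IH] v' m' H; inversion H; subst => //; try congruence.
by case: (IH _ _ H1) => -> ->.
Qed.

Lemma skip_unary_det k A A1 : skip_unary k A A1 -> forall A2, skip_unary k A A2 -> A1 = A2.
Proof.
elim=> {k A A1} [A | k A v A1 A2 H1 _ IH] A' H; inversion H; subst => //.
by case: (read_unary_det H1 H2) => _ ?; subst; apply: IH.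
Qed.

Lemma parse_pair_det J C r : parse_pair J C r -> forall r', parse_pair J C r' -> r = r'.
Proof.
elim=> {J C r} [J | J C r HC H1 _ IH | J C HC H1 H2 | J C r HC H1 H2 _ IH] r' H;
  inversion H; subst => //; try congruence; by apply: IH.
Qed.

Lemma iter_decoder_loop t s : nth 0 s 5 = 0 -> iter t (step decoder) (128, regs_of s) = (128, regs_of s).
Proof. by move=> h; elim: t => //= t ->; rewrite step_decoder // [nth _ decoder _]/= /exec {1}/regs_of h. Qed.

Lemma diverges_not_computes a b o : diverges (0, init_regs a b) -> ~ cm_computes decoder a b o.
Proof.
case=> s' [[tD HD] H5] [t [Ht _]].
have E1 : iter (t + tD) (step decoder) (0, init_regs a b) = (128, regs_of s').
  by rewrite iterD HD iter_decoder_loop.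
have E2 : iter (tD + t) (step decoder) (0, init_regs a b) = iter t (step decoder) (0, init_regs a b).
  by rewrite iterD iter_step_halted.
by move: Ht; rewrite -E2 addnC E1 size_decoder.
Qed.

Lemma computes_output_unique a b o o' s :
  reach decoder (0, init_regs a b) (129, regs_of (o' :: s)) -> cm_computes decoder a b o -> o = o'.
Proof.
case=> tH HH [t [Ht Ho]].
have E1 : iter (t + tH) (step decoder) (0, init_regs a b) = (129, regs_of (o' :: s)).
  by rewrite iterD HH iter_step_halted // size_decoder.
have E2 : iter (tH + t) (step decoder) (0, init_regs a b) = iter t (step decoder) (0, init_regs a b).
  by rewrite iterD iter_step_halted.
by move: Ho; rewrite -E2 addnC E1.
Qed.

Lemma decoder_computesP p C o : cm_computes decoder (nat_of_bits p) C o <-> decodes p C (Some o).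
Proof.
split=> [H | Hs].
  have [[o'|] Hs] := decodes_total p C; have /= := run_decodes Hs.
    by case=> s Hr; rewrite (computes_output_unique Hr H).
  by move=> Hd; case: (diverges_not_computes Hd H).
by case: (run_decodes Hs) => s [t Ht]; exists t; rewrite Ht size_decoder.
Qed.

Lemma follow_nil_inv J A o : follow [::] J A (Some o) -> exists A1, read_unary A o.+1 A1.
Proof. by move=> H; inversion H; subst; eexists; eassumption. Qed.

Lemma follow_cons_inv b p J A o : follow (b :: p) J A (Some o) ->
  exists A1 A2 A3, [/\ read_unary A 0 A1, skip_unary J A1 A2, skip_unary b A2 A3
                     & follow p (push_bit J b) A3 (Some o)].
Proof. by move=> H; inversion H; subst; do 3 eexists; split; eassumption. Qed.

Lemma follow_prefix_free p q J A o o' :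
  follow p J A (Some o) -> follow q J A (Some o') -> prefix p q -> p = q.
Proof.
elim: p q J A => [|b p IH] [|c q] J A Hp Hq //=.
  have [A1 HA] := follow_nil_inv Hp.
  have [B1 [B2 [B3 [G1 _ _ _]]]] := follow_cons_inv Hq.
  by case: (read_unary_det HA G1).
case/andP => /eqP ? Hpre; subst c.
have [A1 [A2 [A3 [H1 H2 H3 H4]]]] := follow_cons_inv Hp.
have [B1 [B2 [B3 [G1 G2 G3 G4]]]] := follow_cons_inv Hq.
case: (read_unary_det H1 G1) => _ ?; subst.
have ? := skip_unary_det H2 G2; subst.
have ? := skip_unary_det H3 G3; subst.
by rewrite (IH _ _ _ H4 G4 Hpre).
Qed.

Definition decoder_machine : machine :=
  fun p c o => cm_computes decoder (nat_of_bits p) (nat_of_bits c) (nat_of_bits o).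

Lemma decoder_machine_prefix_free : prefix_free_machine decoder_machine.
Proof.
split; first by exists decoder.
move=> c p q o o' /decoder_computesP Hp /decoder_computesP Hq Hpre.
case: Hp => [[_ //]|[J [A [A' [H1 H2 H3]]]]].
case: Hq => [[_ //]|[J' [B [B' [G1 G2 G3]]]]].
case: (parse_pair_det H1 G1) => ? ?; subst.
have ? := skip_unary_det H2 G2; subst.
exact: follow_prefix_free H3 G3 Hpre.
Qed.

Lemma parse_pair_bits z alpha J :
  parse_pair J (nat_of_bits (pair_bits z alpha)) (Some (foldl push_bit J z, nat_of_bits alpha)).
Proof.
elim: z J => [|b z IH] J.
  have := @ParseSep J (nat_of_bits [:: false, true & alpha]).
  by rewrite !pop_bit_cons; apply=> //; rewrite /= addn1.
have -> : pair_bits (b :: z) alpha = [:: b, b & pair_bits z alpha] by [].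
have [k hk] := nat_of_bits_consS b (b :: pair_bits z alpha).
have C_gt0 : 0 < nat_of_bits [:: b, b & pair_bits z alpha] by rewrite hk.
by case: b {hk} C_gt0 => C_gt0; [apply: ParseTrue | apply: ParseFalse]; rewrite ?pop_bit_cons.
Qed.

(** * Karchmer-Wigderson walks in formulas *)

(* Walk down F keeping a child of value pos at z: where z determines such a
   child (an [FOr] node when pos is true, an [FAnd] node when it is false)
   take it, elsewhere let the next bit of s choose.  The value is i.+1 if s is
   used up exactly when the walk reaches a literal on x_i, and 0 otherwise. *)
Fixpoint leaf_of n (F : formula n) (z : n.-tuple bool) (pos : bool) (s : seq bool) : nat :=
  match F with
  | Lit i _ => if s is [::] then (nat_of_ord i).+1 else 0
  | FAnd G H => if pos then (if s is b :: s' then leaf_of (if b then H else G) z pos s' else 0)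
                else leaf_of (if ~~ feval G z then G else H) z pos s
  | FOr G H => if pos then leaf_of (if feval G z then G else H) z pos s
               else (if s is b :: s' then leaf_of (if b then H else G) z pos s' else 0)
  end.

Lemma leaf_of_cons n (G : formula n) z pos b s :
  0 < leaf_of G z pos [::] -> leaf_of G z pos (b :: s) = 0.
Proof.
case: pos; elim: G => [i c|G IHG H IHH|G IHG H IHH] //=;
  by case: ifP => _ ?; [apply: IHG | apply: IHH].
Qed.

Lemma leaf_of_step n (G : formula n) z pos b : leaf_of G z pos [::] = 0 ->
  exists G', fdepth G' < fdepth G /\ forall s, leaf_of G z pos (b :: s) = leaf_of G' z pos s.
Proof.
case: pos; elim: G => [i c|G IHG H IHH|G IHG H IHH] //=;
  try by move=> _; exists (if b then H else G); split=> //; clear IHG IHH; case: b; lia.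
all: case: ifP => _ h; [case: (IHG h) | case: (IHH h)] => G' [h1 h2]; exists G'; split=> //; lia.
Qed.

(* Player x answers at [FOr] nodes and player y at [FAnd] nodes; each walk
   reads the answers of the other player. *)
Lemma kw_walks n (G : formula n) x y : feval G x -> ~~ feval G y ->
  exists (i : 'I_n) px py, [/\ tnth x i != tnth y i, leaf_of G x true px = i.+1,
     leaf_of G y false py = i.+1 & size px + size py <= fdepth G].
Proof.
elim: G => [i c|G IHG H IHH|G IHG H IHH] /=.
- by move=> /eqP hx hy; exists i, [::], [::]; split=> //; rewrite hx eq_sym.
- move=> /andP [hG hH] hy; case hGy: (feval G y) => /=.
    have hHy : ~~ feval H y by move: hy; rewrite hGy.
    have [i [px [py [h1 h2 h3 h4]]]] := IHH hH hHy.
    by exists i, (true :: px), py; split=> //=; lia.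
  have [i [px [py [h1 h2 h3 h4]]]] := IHG hG (negbT hGy).
  by exists i, (false :: px), py; split=> //=; lia.
- move=> hx; rewrite negb_or => /andP [hGy hHy]; case hGx: (feval G x) => /=.
    have [i [px [py [h1 h2 h3 h4]]]] := IHG hGx hGy.
    by exists i, px, (false :: py); split=> //=; lia.
  have hHx : feval H x by move: hx; rewrite hGx.
  have [i [px [py [h1 h2 h3 h4]]]] := IHH hHx hHy.
  by exists i, px, (true :: py); split=> //=; lia.
Qed.

(** * The table of all walks *)

Definition table_size n (F : formula n) := 2 ^ (n + fdepth F).+1.

(* The table is indexed by [rcode] of strings z ++ s with |z| = n; those with
   |s| <= fdepth F have indices below [table_size F]. *)
Definition entry n (F : formula n) (l : seq bool) : nat :=
  if n <= size l then
    let z := insubd (nseq_tuple n false) (take n l) in leaf_of F z (feval F z) (drop n l)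
  else 0.

Definition table_entry n (F : formula n) j := entry F (rev (bits_of j)).

Definition unary v := nseq v true ++ [:: false].

Definition table_from n (F : formula n) j :=
  nat_of_bits (flatten [seq unary (table_entry F k) | k <- iota j (table_size F - j)]).

Definition walk_table n (F : formula n) :=
  flatten [seq unary (table_entry F k) | k <- iota 0 (table_size F)].

Lemma read_unary_nseq v rest :
  read_unary (nat_of_bits (nseq v true ++ false :: rest)) v (nat_of_bits rest).
Proof.
elim: v => [|v IH] /=.
  by have := @ReadUnary0 (nat_of_bits (false :: rest)); rewrite pop_bit_cons; apply.
by have := @ReadUnaryS (nat_of_bits (true :: nseq v true ++ false :: rest)); rewrite pop_bit_cons; apply.
Qed.

Section WalkTable.

Variables (n : nat) (F : formula n).

Lemma table_from_read j : j < table_size F ->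
  read_unary (table_from F j) (table_entry F j) (table_from F j.+1).
Proof. by move=> hj; rewrite /table_from -(subnSK hj) /= /unary -catA; apply: read_unary_nseq. Qed.

Lemma table_from_skip k j : j + k <= table_size F ->
  skip_unary k (table_from F j) (table_from F (j + k)).
Proof.
elim: k j => [|k IH] j hjk; first by rewrite addn0; apply: SkipUnary0.
apply: SkipUnaryS (table_from_read (_ : j < table_size F)) _; first by lia.
by rewrite -addSnnS; apply: IH; lia.
Qed.

Lemma table_from0 : table_from F 0 = nat_of_bits (walk_table F).
Proof. by rewrite /table_from subn0. Qed.

Lemma table_entry_rcode (z : n.-tuple bool) s :
  table_entry F (rcode (z ++ s)) = leaf_of F z (feval F z) s.
Proof.
rewrite /table_entry rcodeK /entry size_cat size_tuple leq_addr /=.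
by rewrite take_size_cat ?size_tuple // drop_size_cat ?size_tuple // valKd.
Qed.

Lemma rcode_lt_table_size (z : n.-tuple bool) s :
  size s <= fdepth F -> rcode (z ++ s) < table_size F.
Proof.
move=> hs; apply: leq_trans (rcode_lt _) _.
by rewrite leq_pexp2l // size_cat size_tuple; lia.
Qed.

(* G is the subformula reached from F by the walk s. *)
Lemma follow_walk_table (z : n.-tuple bool) i p s G :
  (forall s', leaf_of F z (feval F z) (s ++ s') = leaf_of G z (feval F z) s') ->
  size s + fdepth G <= fdepth F -> leaf_of G z (feval F z) p = i.+1 ->
  follow p (rcode (z ++ s)) (table_from F (rcode (z ++ s))) (Some i).
Proof.
set pos := feval F z; elim: p s G => [|b p IH] s G HG Hs Hp.
  have := table_from_read (rcode_lt_table_size z (ltac:(lia) : size s <= fdepth F)).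
  by rewrite table_entry_rcode -/pos -[s]cats0 HG /= Hp; apply: (FollowLeaf [::]).
have hv : leaf_of G z pos [::] = 0.
  by case h: (leaf_of G z pos [::]) => [//|k]; rewrite leaf_of_cons ?h in Hp.
have [G' [hd HG']] := leaf_of_step b hv.
set J := rcode (z ++ s).
have hJ : J < table_size F by apply: rcode_lt_table_size; lia.
have hJ' : rcode (z ++ s ++ [:: b]) = push_bit J b by rewrite catA cats1 rcode_rcons.
have hJ'F : push_bit J b < table_size F.
  by rewrite -hJ'; apply: rcode_lt_table_size; rewrite size_cat /=; lia.
have R := table_from_read hJ; rewrite table_entry_rcode -/pos -[s]cats0 HG hv in R.
have S1 : skip_unary J (table_from F J.+1) (table_from F (J.+1 + J)).
  by apply: table_from_skip; move: hJ'F; rewrite /push_bit; case: (b); lia.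
have S2 : skip_unary b (table_from F (J.+1 + J)) (table_from F (J.+1 + J + b)).
  by apply: table_from_skip; move: hJ'F; rewrite /push_bit; case: (b); lia.
apply: (FollowCons R S1 S2).
have -> : J.+1 + J + b = push_bit J b by rewrite /push_bit; case: (b); lia.
rewrite -hJ'; apply: IH.
- by move=> s'; rewrite -catA HG /= HG'.
- by rewrite size_cat /=; lia.
- by rewrite -HG'.
Qed.

Lemma decodes_walk (z : n.-tuple bool) p i : leaf_of F z (feval F z) p = i.+1 ->
  decodes p (nat_of_bits (pair_bits z (walk_table F))) (Some i).
Proof.
move=> Hp; right; exists (rcode z), (nat_of_bits (walk_table F)), (table_from F (rcode z)).
split; first by rewrite -foldl_push_bit; apply: parse_pair_bits.
  rewrite -table_from0 -[rcode z]add0n; apply: table_from_skip; rewrite add0n.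
  by apply: ltnW; rewrite -[z : seq bool]cats0; apply: rcode_lt_table_size.
by have := follow_walk_table (s := [::]) (fun s => erefl) (leqnn _) Hp; rewrite cats0.
Qed.

End WalkTable.

(** * Formulas of minimal depth *)

Lemma feval_foldr_and n (l : seq (formula n)) d y :
  feval (foldr (@FAnd n) d l) y = all (fun G => feval G y) l && feval d y.
Proof. by elim: l => //= G l ->; rewrite andbA. Qed.

Lemma feval_foldr_or n (l : seq (formula n)) d y :
  feval (foldr (@FOr n) d l) y = has (fun G => feval G y) l || feval d y.
Proof. by elim: l => //= G l ->; rewrite orbA. Qed.

Definition minterm n (x : n.+1.-tuple bool) : formula n.+1 :=
  foldr (@FAnd _) (Lit ord0 (tnth x ord0)) [seq Lit i (tnth x i) | i <- enum 'I_n.+1].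

Lemma feval_minterm n (x y : n.+1.-tuple bool) : feval (minterm x) y = (y == x).
Proof.
rewrite /minterm feval_foldr_and /= all_map.
apply/idP/eqP => [/andP [/allP H _]|->].
  by apply: eq_from_tnth => i; apply/eqP; apply: (H i (mem_enum _ i)).
by rewrite eqxx andbT; apply/allP => i _ /=.
Qed.

Definition dnf n (f : n.+1.-tuple bool -> bool) : formula n.+1 :=
  foldr (@FOr _) (FAnd (Lit ord0 true) (Lit ord0 false)) [seq minterm x | x <- enum f].

Lemma feval_dnf n (f : n.+1.-tuple bool -> bool) y : feval (dnf f) y = f y.
Proof.
rewrite /dnf feval_foldr_or /= has_map.
rewrite [X in _ || X](_ : _ = false) ?orbF; last by case: (tnth y _).
apply/hasP/idP => [[x]|fy]; last by exists y; rewrite ?mem_enum //= feval_minterm.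
by rewrite mem_enum => fx /=; rewrite feval_minterm => /eqP ->.
Qed.

Lemma depth_witness n (f : n.+1.-tuple bool -> bool) :
  exists F : formula n.+1, (forall x, feval F x = f x) /\ fdepth F = depth f.
Proof.
apply: (natmin_holds (P := fun d => exists F, (forall x, feval F x = f x) /\ fdepth F = d)).
by exists (dnf f); split=> //; apply: feval_dnf.
Qed.

(** * Complexity bounds *)

Lemma KI_le (U : machine) n (f : n.-tuple bool -> bool) alpha m :
  (forall x y, f x != f y -> exists i, tnth x i != tnth y i /\
     Kc U i (pair_bits x alpha) + Kc U i (pair_bits y alpha) <= m) ->
  KI U f <= m.
Proof.
move=> sep; apply: leq_trans (natmin_le (k := \max_(xy | f xy.1 != f xy.2) _) _) _.
  by exists alpha.
apply/bigmax_leqP => -[x y] /= /sep [i [neq_xy Kxy]].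
by apply: leq_trans Kxy; apply: natmin_le; exists i.
Qed.

Section Complexity.

Variables (U : machine) (rho : seq bool).
Hypothesis U_simulates_decoder : forall p c o, decoder_machine p c o <-> U (rho ++ p) c o.

Lemma Kc_le_decodes i c p : decodes p (nat_of_bits c) (Some i) -> Kc U i c <= size rho + size p.
Proof.
move=> Hs; apply: natmin_le; exists (rho ++ p), (bits_of i).
by rewrite bits_ofK size_cat; split=> //; apply/U_simulates_decoder/decoder_computesP; rewrite bits_ofK.
Qed.

Lemma Kc_separating_leaf n (F : formula n) x y : feval F x -> ~~ feval F y ->
  exists i : 'I_n, tnth x i != tnth y i /\
    Kc U i (pair_bits x (walk_table F)) + Kc U i (pair_bits y (walk_table F))
      <= fdepth F + (size rho + size rho).
Proof.
move=> Fx Fy; have [i [px [py [neq_xy walk_x walk_y size_p]]]] := kw_walks Fx Fy.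
exists i; split=> //.
have Kx := Kc_le_decodes (decodes_walk (ltac:(by rewrite Fx) : leaf_of F x (feval F x) px = i.+1)).
have Ky := Kc_le_decodes (decodes_walk (ltac:(by rewrite (negbTE Fy)) : leaf_of F y (feval F y) py = i.+1)).
by apply: leq_trans (leq_add Kx Ky) _; lia.
Qed.

End Complexity.

Theorem mainTheorem5 (U : machine) (hU : universal_pf U) :
  exists c : nat, forall (n : nat) (f : n.-tuple bool -> bool),
    KI U f <= depth f + c.
Proof.
have [_ /(_ _ decoder_machine_prefix_free) [rho Hrho]] := hU.
exists (size rho + size rho) => -[|n] f.
  by apply: (KI_le (alpha := [::])) => x y; rewrite (tuple0 x) (tuple0 y) eqxx.
have [F [HF <-]] := depth_witness f.
apply: (KI_le (alpha := walk_table F)) => x y.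
case fx: (f x); case fy: (f y) => // _.
  by apply: (Kc_separating_leaf Hrho); rewrite HF ?fx ?fy.
have := Kc_separating_leaf Hrho (F := F) (x := y) (y := x).
rewrite !HF fx fy => /(_ erefl erefl) [i [neq_yx Kyx]].
by exists i; rewrite eq_sym addnC.
Qed.
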